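(* Let $n\ge 1$. The path $P_n$ is pseudo-Gorenstein$^{*}$ if and only if $n\equiv 0,2,9,11 \pmod{12}$.
   Context: For a finite simple graph $G$ on vertex set $[N]$, let $S=K[x_1,\dots,x_N]$ ($K$ a field) and $I(G)$ the edge ideal generated by $x_ix_j$, $\{i,j\}\in E(G)$. Let $\alpha(G)$ be the independence number (equal to $\dim S/I(G)$). Write the Hilbert series of $S/I(G)$ uniquely as $(h_0+\dots+h_st^s)/(1-t)^{\alpha(G)}$ with $h_s\ne 0$; the numerator is the $h$-polynomial $h_G(t)$, and $\mathfrak a(G)=s-\alpha(G)$. $G$ is pseudo-Gorenstein$^{*}$ if $h_s=1$ and $\mathfrak a(G)=0$. $P_n$ denotes the path on $n$ vertices. *)

From mathcomp Require Import all_boot all_order all_algebra.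
Set Implicit Arguments. Unset Strict Implicit. Unset Printing Implicit Defensive.
Import GRing.Theory Num.Theory.

(* A finite simple graph on vertex set [N] = 'I_N is given by an edge relation
   e : rel 'I_N, assumed symmetric and irreflexive where relevant. *)

Section EdgeIdeal.
Variables (N : nat) (e : rel 'I_N).

Definition independent (A : {set 'I_N}) : bool :=
  [forall i, forall j, (i \in A) && (j \in A) ==> ~~ e i j].

Definition alpha : nat := \max_(A : {set 'I_N} | independent A) #|A|.

(* A monomial x^m of degree k of S = K[x_1..x_N] is an exponent vector
   m : 'I_N -> nat with sum k (entries bounded by k, hence 'I_k.+1).
   x^m lies in the monomial ideal I(G) iff some generator x_i x_j ({i,j} edge)
   divides it, i.e. m i > 0 and m j > 0.  *)
Definition monomials_deg (k : nat) : {set {ffun 'I_N -> 'I_k.+1}} :=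
  [set m : {ffun 'I_N -> 'I_k.+1} | \sum_i (m i : nat) == k].

Definition in_edge_ideal k (m : {ffun 'I_N -> 'I_k.+1}) : bool :=
  [exists i, exists j, e i j && (0 < m i) && (0 < m j)].

(* Hilbert function of S/I(G): dim_K (S/I(G))_k = number of monomials of
   degree k not in the monomial ideal I(G) (they form a K-basis). *)
Definition hilb_fun (k : nat) : nat :=
  #|[set m in monomials_deg k | ~~ in_edge_ideal m]|.

(* Coefficients of the h-polynomial: h(t) = HS(t) * (1-t)^alpha as a formal
   power series, where HS(t) = sum_k hilb_fun k t^k. *)
Definition h_coef (j : nat) : int :=
  \sum_(i < alpha.+1)
     ((-1) ^+ i * ('C(alpha, i))%:Z * (if (i <= j)%N then (hilb_fun (j - i))%:Z else 0))%R.

(* G is pseudo-Gorenstein*: the top nonzero coefficient h_s of h_G equals 1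
   and a(G) = s - alpha(G) = 0. *)
Definition pseudo_gorenstein_star : Prop :=
  exists s : nat,
    [/\ h_coef s = 1%R, (forall j, s < j -> h_coef j = 0%R) & s = alpha].

End EdgeIdeal.

Definition path_rel (n : nat) : rel 'I_n :=
  fun i j => (i.+1 == j :> nat) || (j.+1 == i :> nat).
Arguments path_rel n : clear implicits.

From mathcomp Require Import all_boot all_order all_algebra.
From mathcomp Require Import zify.
Set Implicit Arguments. Unset Strict Implicit. Unset Printing Implicit Defensive.
Import GRing.Theory.

(** A monomial lies outside I(G) iff its support is independent, so the
Hilbert series of S/I(G) is the sum of (t/(1-t))^|F| over the independent
sets F, and h_G(t) is the sum of t^|F| (1-t)^(alpha - |F|).  Every term has
degree alpha, so h_G has degree at most alpha and its coefficient of
t^alpha is (-1)^alpha I(G; -1), where I is the independence polynomial: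
G is pseudo-Gorenstein* iff this number is 1.  For the path, alpha(P_n) is
ceil(n/2), and deleting the last vertex gives
I(P_(n+1); -1) = I(P_n; -1) - I(P_(n-1); -1), a sequence of period 6
(1, 0, -1, -1, 0, 1, ...); multiplied by (-1)^ceil(n/2) it has period 12
and equals 1 exactly when n = 0, 2, 9, 11 (mod 12). *)

Section PolyCoef.
Variable R : comNzRingType.
Local Open Scope ring_scope.
Implicit Types p q : {poly R}.

Definition eq_modXn k p q := forall i, (i < k)%N -> p`_i = q`_i.

Lemma eq_modXn_refl k p : eq_modXn k p p.
Proof. by []. Qed.

Lemma eq_modXn_sum k (I : finType) (P : pred I) (p q : I -> {poly R}) :
  (forall F, P F -> eq_modXn k (p F) (q F)) ->
  eq_modXn k (\sum_(F | P F) p F) (\sum_(F | P F) q F).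
Proof. by move=> pq i ik; rewrite !coef_sum; apply: eq_bigr => F /pq ->. Qed.

Lemma eq_modXnM k p1 p2 q1 q2 :
  eq_modXn k p1 q1 -> eq_modXn k p2 q2 -> eq_modXn k (p1 * p2) (q1 * q2).
Proof.
move=> pq1 pq2 i ik; rewrite !coefM; apply: eq_bigr => j _.
have ji := ltn_ord j.
by rewrite pq1 ?pq2 //; lia.
Qed.

Lemma eq_modXnX k p q n : eq_modXn k p q -> eq_modXn k (p ^+ n) (q ^+ n).
Proof.
move=> pq; elim: n => [|n IH]; first by rewrite !expr0.
by rewrite !exprS; apply: eq_modXnM.
Qed.

Lemma coef_1subX_expM d p j : ((1 - 'X) ^+ d * p)`_j =
  \sum_(i < d.+1)
    (-1) ^+ i * 'C(d, i)%:R * (if (i <= j)%N then p`_(j - i) else 0).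
Proof.
rewrite addrC exprD1n mulr_suml coef_sum; apply: eq_bigr => i _.
rewrite -(scaleN1r 'X) exprZn mulrnAl -scalerAl coefMn coefZ coefXnM.
by case: ltnP => ij; rewrite ?mulr0 ?mul0rn // mulr_natr mulrnAl.
Qed.

Lemma coef_1subX_exp d j :
  ((1 - 'X) ^+ d : {poly R})`_j = (-1) ^+ j * 'C(d, j)%:R.
Proof.
rewrite -[_ ^+ d]mulr1 coef_1subX_expM.
have term i : (if (i <= j)%N then (1 : {poly R})`_(j - i) else 0) = (i == j)%:R.
  by rewrite coef1 subn_eq0 eqn_leq; case: leqP.
under eq_bigr do rewrite term.
case: (ltnP j d.+1) => jd.
  rewrite (bigD1 (Ordinal jd)) //= eqxx mulr1 big1 ?addr0 // => i /negbTE ij.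
  by rewrite -val_eqE /= in ij; rewrite ij mulr0.
rewrite bin_small // mulr0 big1 // => i _.
by rewrite ltn_eqF ?mulr0 // (leq_trans (ltn_ord i) jd).
Qed.

(* t + t^2 + ... + t^k, the truncation of t/(1-t) *)
Definition geom_trunc k : {poly R} := \poly_(j < k.+1) (0 < j)%N%:R.

Lemma coef_geom_trunc k i : (geom_trunc k)`_i = (0 < i <= k)%N%:R.
Proof. by rewrite coef_poly ltnS; case: (i <= k)%N; rewrite ?andbT ?andbF. Qed.

Lemma geom_trunc_modXn k K :
  (k <= K)%N -> eq_modXn k.+1 (geom_trunc K) (geom_trunc k).
Proof.
move=> kK i; rewrite ltnS => ik.
by rewrite !coef_geom_trunc ik (leq_trans ik kK).
Qed.

Lemma geom_trunc_1subX k : eq_modXn k.+1 (geom_trunc k * (1 - 'X)) 'X.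
Proof.
move=> i; rewrite ltnS => ik.
rewrite mulrBr mulr1 coefB coefMX !coef_geom_trunc coefX.
by case: i ik => [|[|i]] //= ik; rewrite ?subr0 ?ik ?(ltnW ik) ?subrr.
Qed.

Lemma coef_prod_sum (I : finType) n (c : I -> 'I_n -> R) d :
  (\prod_i \sum_(j < n) c i j *: 'X^j)`_d =
  \sum_(m : {ffun I -> 'I_n} | \sum_i (m i : nat) == d) \prod_i c i (m i).
Proof.
rewrite bigA_distr_bigA coef_sum [RHS]big_mkcond; apply: eq_bigr => m _.
rewrite scaler_prod prodrXr coefZ coefXn eq_sym.
by case: eqP; rewrite ?mulr1 ?mulr0.
Qed.

End PolyCoef.

Section EdgeIdeal.
Variables (N : nat) (e : rel 'I_N).
Local Open Scope ring_scope.
Implicit Types (A F : {set 'I_N}) (v : 'I_N).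

Lemma independentP F : reflect {in F &, forall i j, ~~ e i j} (independent e F).
Proof.
apply: (iffP forallP) => [indF i j iF jF|indF i].
  by have /forallP/(_ j) := indF i; rewrite iF jF.
by apply/forallP => j; apply/implyP => /andP[iF jF]; apply: indF.
Qed.

Definition supp k (m : {ffun 'I_N -> 'I_k.+1}) : {set 'I_N} :=
  [set i | (0 < m i)%N].

Lemma in_edge_idealN k (m : {ffun 'I_N -> 'I_k.+1}) :
  ~~ in_edge_ideal e m = independent e (supp m).
Proof.
rewrite /in_edge_ideal negb_exists; apply: eq_forallb => i.
rewrite negb_exists; apply: eq_forallb => j; rewrite !inE.
by case: (e i j); case: (0 < m i)%N; case: (0 < m j)%N.
Qed.

Definition hilb_trunc k : {poly int} :=
  \sum_(F | independent e F) geom_trunc int k ^+ #|F|.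

Lemma geom_trunc_expE k F : geom_trunc int k ^+ #|F| =
  \prod_i \sum_(j < k.+1) ((0 < j)%N == (i \in F))%:R *: 'X^j.
Proof.
rewrite -prodr_const [RHS](bigID (mem F)) /= [X in _ = _ * X]big1 ?mulr1.
  apply: eq_bigr => i ->; rewrite /geom_trunc poly_def.
  by apply: eq_bigr => j _; rewrite eqb_id.
move=> i /negbTE ->; rewrite big_ord_recl big1 ?addr0 ?scale1r ?expr0 // => j _.
by rewrite scale0r.
Qed.

Lemma prod_supp_indicator k (m : {ffun 'I_N -> 'I_k.+1}) F :
  \prod_i ((0 < m i)%N == (i \in F))%:R = (supp m == F)%:R :> int.
Proof.
case: eqP => [<-|neq]; first by rewrite big1 // => i _; rewrite inE eqxx.
have /existsP[i /negbTE mFi] : [exists i, (0 < m i)%N != (i \in F)].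
  apply: contra_notT neq => /existsPn mF.
  by apply/setP => i; rewrite inE; have := mF i; rewrite negbK => /eqP.
by rewrite (bigD1 i) //= mFi mul0r.
Qed.

Lemma hilb_funE k : (hilb_fun e k)%:Z = (hilb_trunc k)`_k.
Proof.
rewrite /hilb_fun -sum1_card -natz natr_sum.
rewrite (partition_big (@supp k) (independent e)) => [|m]; last first.
  by rewrite !inE in_edge_idealN => /andP[].
rewrite coef_sum; apply: eq_bigr => F indF.
rewrite geom_trunc_expE coef_prod_sum big_mkcond [RHS]big_mkcond.
apply: eq_bigr => m _; rewrite prod_supp_indicator !inE in_edge_idealN.
by case: (supp m =P F) => [->|_]; rewrite ?indF ?andbT ?andbF //; case: ifP.
Qed.

Lemma card_le_alpha F : independent e F -> (#|F| <= alpha e)%N.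
Proof. exact: (@leq_bigmax_cond _ (independent e) (fun A => #|A|)). Qed.

Definition h_poly : {poly int} :=
  \sum_(F | independent e F) 'X^#|F| * (1 - 'X) ^+ (alpha e - #|F|).

Lemma h_coef_hilb_trunc j : h_coef e j = ((1 - 'X) ^+ alpha e * hilb_trunc j)`_j.
Proof.
rewrite coef_1subX_expM; apply: eq_bigr => i _; rewrite natz.
case: ifP => // ij.
have trunc : eq_modXn (j - i).+1 (hilb_trunc j) (hilb_trunc (j - i)).
  by apply: eq_modXn_sum => F _; apply/eq_modXnX/geom_trunc_modXn/leq_subr.
by rewrite hilb_funE trunc.
Qed.

Lemma hilb_trunc_h_poly j :
  eq_modXn j.+1 ((1 - 'X) ^+ alpha e * hilb_trunc j) h_poly.
Proof.
rewrite /hilb_trunc mulr_sumr; apply: eq_modXn_sum => F /card_le_alpha le_Fa.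
rewrite -{1}(subnK le_Fa) exprD -mulrA -exprMn mulrC.
apply: eq_modXnM; last exact: eq_modXn_refl.
by apply: eq_modXnX; rewrite mulrC; apply: geom_trunc_1subX.
Qed.

Lemma coef_h_poly j : (alpha e <= j)%N -> h_poly`_j =
  \sum_(F | independent e F) (-1) ^+ (j - #|F|) * 'C(alpha e - #|F|, j - #|F|)%:R.
Proof.
move=> le_aj; rewrite coef_sum; apply: eq_bigr => F /card_le_alpha le_Fa.
by rewrite coefXnM ltnNge (leq_trans le_Fa le_aj) coef_1subX_exp.
Qed.

Lemma h_coef_gt j : (alpha e < j)%N -> h_coef e j = 0.
Proof.
move=> lt_aj; rewrite h_coef_hilb_trunc hilb_trunc_h_poly //.
rewrite (coef_h_poly (ltnW lt_aj)).
by rewrite big1 // => F /card_le_alpha le_Fa; rewrite bin_small ?mulr0 //; lia.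
Qed.

Definition signed_indep A : int :=
  \sum_(F | independent e F && (F \subset A)) (-1) ^+ #|F|.

Lemma h_coef_alpha : h_coef e (alpha e) = (-1) ^+ alpha e * signed_indep setT.
Proof.
rewrite h_coef_hilb_trunc hilb_trunc_h_poly // coef_h_poly // mulr_sumr.
apply: eq_big => [F|F /card_le_alpha le_Fa]; first by rewrite subsetT andbT.
by rewrite binn mulr1 -signr_odd oddB // signr_addb !signr_odd.
Qed.

Lemma pseudo_gorenstein_starE :
  pseudo_gorenstein_star e <-> h_coef e (alpha e) = 1.
Proof.
split=> [[s [hs1 _ <-]] // | ha1].
by exists (alpha e); split=> // j; apply: h_coef_gt.
Qed.

Definition nbhd v : {set 'I_N} := [set u | e u v || e v u].

Lemma independentU1 v F :
  independent e (v |: F) = [&& ~~ e v v, independent e F & [disjoint F & nbhd v]].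
Proof.
apply/independentP/and3P => [indvF | [evv /independentP indF disF]].
  split; first by apply: indvF; rewrite setU11.
    by apply/independentP => i j iF jF; apply: indvF; rewrite !inE ?iF ?jF orbT.
  rewrite disjoint_subset; apply/subsetP => u uF.
  by rewrite !inE negb_or !indvF ?setU11 // !inE uF orbT.
have nbF u : u \in F -> ~~ e u v && ~~ e v u.
  by move=> uF; rewrite -negb_or; have := disjointFr disF uF; rewrite inE => ->.
move=> i j; rewrite !inE => /orP[/eqP-> | iF] /orP[/eqP-> | jF] //.
- by case/andP: (nbF j jF).
- by case/andP: (nbF i iF).
- exact: indF iF jF.
Qed.

Lemma signed_indep0 : signed_indep set0 = 1.
Proof.
rewrite /signed_indep (big_pred1 set0) ?cards0 // => F /=.
rewrite subset0 andbC; case: (F =P set0) => //= ->.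
by apply/independentP => i j; rewrite inE.
Qed.

Lemma setU1D1_eq v F : ((v |: F) :\ v == F) = (v \notin F).
Proof.
case: (boolP (v \in F)) => vF; last by rewrite setU1K // eqxx.
by apply/negbTE/eqP => vFE; have := setD11 v (v |: F); rewrite vFE vF.
Qed.

Lemma signed_indep_del v A : v \in A -> ~~ e v v ->
  signed_indep A = signed_indep (A :\ v) - signed_indep (A :\ v :\: nbhd v).
Proof.
move=> vA evv; rewrite /signed_indep (bigID (fun F => v \in F)) /= addrC.
congr (_ + _); first by apply: eq_bigl => F; rewrite subsetD1 andbA.
rewrite -sumrN (reindex_onto (fun F => v |: F) (fun F => F :\ v)) /=; last first.
  by move=> F /andP[_ vF]; rewrite setD1K.
apply: eq_big => [F|F /andP[_]]; last first.
  by rewrite setU1D1_eq => vF; rewrite cardsU1 vF exprS mulN1r.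
rewrite independentU1 subUset sub1set setU11 setU1D1_eq subsetD subsetD1 vA evv.
by case: (independent e F); case: (F \subset A); case: (v \in F);
  rewrite /= ?andbT ?andbF.
Qed.

End EdgeIdeal.

Lemma count_even_iota n : count (fun i => ~~ odd i) (iota 0 n) = uphalf n.
Proof. by elim: n => // n IH; rewrite -addn1 iotaD count_cat IH /=; lia. Qed.

Fixpoint indep_path_m1 n : int :=
  match n with
  | 0 => 1
  | 1 => 0
  | (m.+1 as m1).+1 => (indep_path_m1 m1 - indep_path_m1 m)%R
  end.

Lemma indep_path_m1S n :
  indep_path_m1 n.+1 = (indep_path_m1 n - indep_path_m1 n.-1)%R.
Proof. by case: n. Qed.

Lemma indep_path_m1_add3 n : indep_path_m1 n.+3 = (- indep_path_m1 n)%R.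
Proof. by rewrite /= addrAC subrr add0r. Qed.

Section Path.
Variable N : nat.
Local Notation P := (path_rel N).
Local Open Scope ring_scope.

Definition below b : {set 'I_N} := [set i : 'I_N | (i < b)%N].

Lemma below_N : below N = setT.
Proof. by apply/setP => i; rewrite !inE ltn_ord. Qed.

Lemma below_D1 (x : 'I_N) : below x.+1 :\ x = below x.
Proof. by apply/setP => i; rewrite !inE -val_eqE /=; lia. Qed.

Lemma below_nbhd (x : 'I_N) : below x :\: nbhd P x = below x.-1.
Proof. by apply/setP => i; rewrite !inE /path_rel; lia. Qed.

Lemma signed_indep_belowS (x : 'I_N) :
  signed_indep P (below x.+1) =
    signed_indep P (below x) - signed_indep P (below x.-1).
Proof.
have xx : ~~ P x x by rewrite /path_rel; lia.
by rewrite (@signed_indep_del _ _ x) ?below_D1 ?below_nbhd // inE.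
Qed.

Lemma signed_indep_below b :
  (b <= N)%N -> signed_indep P (below b) = indep_path_m1 b.
Proof.
elim/ltn_ind: b => -[_ _|b IH bN].
  have -> : below 0 = set0 by apply/setP => i; rewrite !inE.
  exact: signed_indep0.
rewrite (signed_indep_belowS (Ordinal bN)) indep_path_m1S /= !IH //; lia.
Qed.

(* halving is injective on a set without two consecutive integers *)
Lemma card_indep_path F : independent P F -> (#|F| <= uphalf N)%N.
Proof.
move=> /independentP indF.
have uniq_half : uniq (map (fun i : 'I_N => i./2) (enum F)).
  rewrite map_inj_in_uniq ?enum_uniq // => i j; rewrite !mem_enum => iF jF /= ij.
  by apply: ord_inj; have := indF i j iF jF; rewrite /path_rel; lia.
rewrite cardE -(size_map (fun i : 'I_N => i./2)) -(size_iota 0 (uphalf N)).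
apply: uniq_leq_size uniq_half _ => _ /mapP[i _ ->].
by rewrite mem_iota; have := ltn_ord i; lia.
Qed.

Lemma alpha_path : alpha P = uphalf N.
Proof.
apply/eqP; rewrite eqn_leq; apply/andP; split.
  by apply/bigmax_leqP => F; apply: card_indep_path.
pose E := [set i : 'I_N | ~~ odd i].
have indE : independent P E.
  by apply/independentP => i j; rewrite !inE /path_rel; lia.
have <- : #|E| = uphalf N.
  rewrite cardsE cardE -count_even_iota -val_enum_ord count_map.
  by rewrite -size_filter enumT.
exact: card_le_alpha indE.
Qed.

End Path.

(* h_(alpha)(P_n), by [h_coef_alpha], [alpha_path] and [signed_indep_below] *)
Definition path_sign n : int := ((-1) ^+ uphalf n * indep_path_m1 n)%R.

Lemma path_sign_add12 n : path_sign (12 + n) = path_sign n.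
Proof.
rewrite /path_sign !addSn add0n !indep_path_m1_add3 !opprK /=.
by rewrite !exprS !mulN1r !opprK.
Qed.

Lemma path_sign_mod12 n : path_sign n = path_sign (n %% 12).
Proof.
rewrite {1}(divn_eq n 12) addnC.
elim: (n %/ 12) => [|q IH]; first by rewrite addn0.
by rewrite mulSn addnCA path_sign_add12.
Qed.

Lemma path_sign_eq1 r : r < 12 -> (path_sign r == 1%R) = (r \in [:: 0; 2; 9; 11]).
Proof. by do 12!case: r => [|r] //. Qed.

Theorem theorem2p4 (n : nat) :
  1 <= n ->
  (pseudo_gorenstein_star (path_rel n) <-> (n %% 12) \in [:: 0; 2; 9; 11]).
Proof.
(* the equivalence holds for n = 0 as well *)
move=> _.
rewrite pseudo_gorenstein_starE h_coef_alpha alpha_path.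
rewrite -below_N signed_indep_below //.
rewrite -/(path_sign n) path_sign_mod12 -path_sign_eq1 ?ltn_mod //.
by split=> [->|/eqP].
Qed.
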